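(* Let $u\le v$ in $S_n$, let $I$ be an order ideal in $[u,v]$, and let $x\in I$ have a strong hypercube cluster $\theta_x:\mathcal{A}_x\to[u,v]$ relative to $I$. Let $\mathcal{I}\subset\mathcal{A}_x$ be any order ideal (with respect to inclusion). Then for any injection $\phi:\mathcal{I}\hookrightarrow[u,v]$ satisfying $\phi(\varnothing)=x$, $\phi(\{y\})=y$ for every singleton $\{y\}\in\mathcal{I}$, and $\phi(Y_1)\to\phi(Y_2)$ in $\Gamma(u,v)$ whenever $Y_1,Y_2\in\mathcal{I}$ with $Y_1\to Y_2$, the map $\phi$ equals the restriction of $\theta_x$ to $\mathcal{I}$.
   Context: $S_n$ is the symmetric group with length $\ell$ (with respect to simple reflections $s_i=(i\ i{+}1)$), $T$ its set of transpositions. The Bruhat graph $\Gamma$ has vertex set $S_n$ and an edge $w\to tw$ whenever $t\in T$, $\ell(w)<\ell(tw)$; Bruhat order $\le$ is reachability in $\Gamma$; $\Gamma(u,v)$ is the induced subgraph on the interval $[u,v]$. An order ideal of $[u,v]$ is a downward closed subset. For an order ideal $I\subset[u,v]$ and $x\in I$ let $\mathcal{Y}_x=\{y\in[u,v]\setminus I: x\to y \text{ in }\Gamma\}$ and $\mathcal{A}_x$ the set of subsets of $\mathcal{Y}_x$ that are antichains in Bruhat order, ordered by inclusion and viewed as a directed graph with $Y_1\to Y_2$ iff $Y_1\subset Y_2$ and $|Y_2\setminus Y_1|=1$. A strong hypercube cluster at $x$ relative to $I$ is a map $\theta_x:\mathcal{A}_x\to[u,v]$ such that: (HC1) $\theta_x(\varnothing)=x$;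 (HC2) $\theta_x(\{y\})=y$ for $y\in\mathcal{Y}_x$; (HC3) if $Y_1\to Y_2$ then $\theta_x(Y_1)\to\theta_x(Y_2)$ is an edge of $\Gamma$; (HC4) if $Y,Y'\in\mathcal{A}_x$ with $|Y|=|Y'|=|Y\cap Y'|+1$ and there is $w$ such that $\theta_x(Y\cap Y')\to\theta_x(Y)\to w$ and $\theta_x(Y\cap Y')\to\theta_x(Y')\to w$ form a diamond (four distinct vertices with these edges) in $\Gamma(u,v)$, then $Y\cup Y'$ is an antichain and $\theta_x(Y\cup Y')=w$. *)

From mathcomp Require Import all_boot all_order all_fingroup.
Set Implicit Arguments. Unset Strict Implicit. Unset Printing Implicit Defensive.

Section Bruhat.
Variable n : nat.
Local Notation Sn := {perm 'I_n}.

(* Coxeter length of w in S_n w.r.t. simple reflections = number of inversions. *)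
Definition perm_length (w : Sn) : nat :=
  #|[set p : 'I_n * 'I_n | (p.1 < p.2)%N && (w p.2 < w p.1)%N]|.

Definition is_transposition (t : Sn) : bool :=
  [exists i : 'I_n, exists j : 'I_n, (i != j) && (t == tperm i j)].

(* Bruhat graph edge w -> t w  (t w = "first w then t" = (w * t)%g in mathcomp's
   composition convention), with l(w) < l(tw). *)
Definition bruhat_edge (w w' : Sn) : bool :=
  [exists t : Sn, is_transposition t && (w' == (w * t)%g)]
  && (perm_length w < perm_length w')%N.

Definition bruhat_le (w w' : Sn) : bool := connect bruhat_edge w w'.

Definition binterval (u v : Sn) : {set Sn} :=
  [set w | bruhat_le u w && bruhat_le w v].

Definition is_order_ideal (u v : Sn) (I : {set Sn}) : Prop :=
  I \subset binterval u v /\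
  forall a b, a \in binterval u v -> b \in I -> bruhat_le a b -> a \in I.

Definition Ycal (u v : Sn) (I : {set Sn}) (x : Sn) : {set Sn} :=
  [set y in binterval u v :\: I | bruhat_edge x y].

Definition is_antichain (Y : {set Sn}) : bool :=
  [forall y1 in Y, forall y2 in Y, bruhat_le y1 y2 ==> (y1 == y2)].

Definition Acal (u v : Sn) (I : {set Sn}) (x : Sn) : {set {set Sn}} :=
  [set Y : {set Sn} | (Y \subset Ycal u v I x) && is_antichain Y].

Definition cover_edge (Y1 Y2 : {set Sn}) : bool :=
  (Y1 \subset Y2) && (#|Y2 :\: Y1| == 1%N).

(* Strong hypercube cluster at x relative to I; theta is a total function, only
   its values on A_x matter. *)
Definition strong_hypercube_cluster (u v : Sn) (I : {set Sn}) (x : Sn)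
    (theta : {set Sn} -> Sn) : Prop :=
  let A := Acal u v I x in
  (forall Y, Y \in A -> theta Y \in binterval u v) /\
  theta set0 = x /\
  (forall y, y \in Ycal u v I x -> theta [set y] = y) /\
  (forall Y1 Y2, Y1 \in A -> Y2 \in A -> cover_edge Y1 Y2 ->
               bruhat_edge (theta Y1) (theta Y2)) /\
  (forall Y Y' w, Y \in A -> Y' \in A ->
               #|Y| = (#|Y :&: Y'|).+1 -> #|Y'| = (#|Y :&: Y'|).+1 ->
               w \in binterval u v ->
               uniq [:: theta (Y :&: Y'); theta Y; theta Y'; w] ->
               bruhat_edge (theta (Y :&: Y')) (theta Y) ->
               bruhat_edge (theta Y) w ->
               bruhat_edge (theta (Y :&: Y')) (theta Y') ->
               bruhat_edge (theta Y') w ->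
               is_antichain (Y :|: Y') /\ theta (Y :|: Y') = w).

End Bruhat.

From mathcomp Require Import all_boot all_order all_fingroup.

(* Induction on |Y|.  For |Y| <= 1 the values are pinned down by HC1, HC2 and
   the normalisation of phi.  Otherwise pick a != b in Y: by induction phi and
   theta agree on Y :\ a, Y :\ b and Y :\ a :\ b, and these three vertices
   together with phi Y form a diamond in the Bruhat interval whose four
   vertices are distinct because phi is injective.  HC4 then forces
   theta Y = theta ((Y :\ a) :|: (Y :\ b)) = phi Y. *)

Set Implicit Arguments.
Unset Strict Implicit.
Unset Printing Implicit Defensive.

Section SetD1.
Variable T : finType.
Implicit Types (A : {set T}) (a b : T).

Lemma setD1C A a b : A :\ a :\ b = A :\ b :\ a.
Proof. by rewrite !setDDl setUC. Qed.

Lemma setD1I A a b : (A :\ a) :&: (A :\ b) = A :\ a :\ b.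
Proof. by rewrite -setDUr setDDl. Qed.

Lemma setD1U A a b : a != b -> (A :\ a) :|: (A :\ b) = A.
Proof.
move=> neq_ab; rewrite -setDIr.
have -> : [set a] :&: [set b] = set0.
  by apply/setP => z; rewrite !inE; case: eqP => // ->; exact/negbTE.
by rewrite setD0.
Qed.

Lemma card_setD1S A a : a \in A -> #|A| = #|A :\ a|.+1.
Proof. by move=> aA; rewrite (cardsD1 a) aA. Qed.

Lemma uniq_setD1_diamond A a b : a \in A -> b \in A -> a != b ->
  uniq [:: A :\ a :\ b; A :\ a; A :\ b; A].
Proof.
move=> aA bA neq_ab.
have neq_set z (B C : {set T}) : z \notin B -> z \in C -> B != C.
  by move=> zB zC; apply: contraNneq zB => ->.
have [aDa bDb] : a \notin A :\ a /\ b \notin A :\ b by rewrite !setD11.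
have aDb : a \in A :\ b by rewrite !inE neq_ab.
have bDa : b \in A :\ a by rewrite !inE eq_sym neq_ab.
have [aDab bDab] : a \notin A :\ a :\ b /\ b \notin A :\ a :\ b.
  by rewrite !inE !eqxx !andbF.
rewrite /= !inE !negb_or !andbT.
by rewrite (neq_set b _ _ bDab bDa) (neq_set a _ _ aDab aDb) (neq_set a _ _ aDab aA)
  (neq_set a _ _ aDa aDb) (neq_set a _ _ aDa aA) (neq_set b _ _ bDb bA).
Qed.

End SetD1.

Lemma cover_edge_setD1 n (Y : {set {perm 'I_n}}) y :
  y \in Y -> cover_edge (Y :\ y) Y.
Proof.
move=> yY; rewrite /cover_edge subD1set setDDr setDv set0U.
by rewrite (setIidPr _) ?sub1set // cards1.
Qed.

Section ClusterUniqueness.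
Variables (n : nat) (u v x : {perm 'I_n}) (I : {set {perm 'I_n}}).
Variables (theta phi : {set {perm 'I_n}} -> {perm 'I_n}).
Variable calI : {set {set {perm 'I_n}}}.

Hypothesis theta_cluster : strong_hypercube_cluster u v I x theta.
Hypothesis calI_sub : calI \subset Acal u v I x.
Hypothesis calI_down :
  forall Y Z : {set {perm 'I_n}}, Y \in calI -> Z \subset Y -> Z \in calI.
Hypothesis phi_inj : {in calI &, injective phi}.
Hypothesis phi_interval : forall Y, Y \in calI -> phi Y \in binterval u v.
Hypothesis phi_set0 : set0 \in calI -> phi set0 = x.
Hypothesis phi_set1 : forall y, [set y] \in calI -> phi [set y] = y.
Hypothesis phi_edge : forall Y1 Y2, Y1 \in calI -> Y2 \in calI ->
  cover_edge Y1 Y2 -> bruhat_edge (phi Y1) (phi Y2).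

Lemma setD1_calI Y a : Y \in calI -> Y :\ a \in calI.
Proof. by move=> YI; apply: calI_down YI (subD1set Y a). Qed.

Lemma phi_edge_setD1 Y a : Y \in calI -> a \in Y ->
  bruhat_edge (phi (Y :\ a)) (phi Y).
Proof.
by move=> YI aY; apply: phi_edge (setD1_calI _ YI) YI (cover_edge_setD1 aY).
Qed.

Lemma phi_eq_theta_small Y : Y \in calI -> #|Y| <= 1 -> phi Y = theta Y.
Proof.
have [_ [theta0 [theta1 _]]] := theta_cluster.
move=> YI; rewrite leq_eqVlt ltnS leqn0.
case/orP=> [/cards1P[y defY] | /eqP/cards0_eq defY]; subst Y; last first.
  by rewrite phi_set0 // theta0.
rewrite phi_set1 // theta1 //.
by move/(subsetP calI_sub): YI; rewrite inE sub1set => /andP[].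
Qed.

Lemma phi_eq_theta_diamond Y a b : Y \in calI -> a \in Y -> b \in Y -> a != b ->
    phi (Y :\ a) = theta (Y :\ a) -> phi (Y :\ b) = theta (Y :\ b) ->
    phi (Y :\ a :\ b) = theta (Y :\ a :\ b) ->
  phi Y = theta Y.
Proof.
have [_ [_ [_ [_ HC4]]]] := theta_cluster.
move=> YI aY bY neq_ab eq_a eq_b eq_ab.
have bYa : b \in Y :\ a by rewrite !inE eq_sym neq_ab.
have aYb : a \in Y :\ b by rewrite !inE neq_ab.
have inA Z : Z \in calI -> Z \in Acal u v I x by apply: (subsetP calI_sub).
have [YaI YbI] := (setD1_calI a YI, setD1_calI b YI).
have card_a : #|Y :\ a| = #|(Y :\ a) :&: (Y :\ b)|.+1.
  by rewrite setD1I -card_setD1S.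
have card_b : #|Y :\ b| = #|(Y :\ a) :&: (Y :\ b)|.+1.
  by rewrite setD1I setD1C -card_setD1S.
have uniq_vertices :
    uniq [:: theta ((Y :\ a) :&: (Y :\ b)); theta (Y :\ a); theta (Y :\ b); phi Y].
  rewrite setD1I -eq_ab -eq_a -eq_b.
  have := uniq_setD1_diamond aY bY neq_ab.
  rewrite -(map_inj_in_uniq (f := phi)) //; apply: sub_in2 phi_inj => Z.
  by rewrite !inE => /or4P[] /eqP ->; rewrite ?setD1_calI.
have edge_a : bruhat_edge (theta ((Y :\ a) :&: (Y :\ b))) (theta (Y :\ a)).
  by rewrite setD1I -eq_ab -eq_a phi_edge_setD1.
have edge_b : bruhat_edge (theta ((Y :\ a) :&: (Y :\ b))) (theta (Y :\ b)).
  by rewrite setD1I -eq_ab setD1C -eq_b phi_edge_setD1 ?setD1_calI.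
have edge_a_Y : bruhat_edge (theta (Y :\ a)) (phi Y) by rewrite -eq_a phi_edge_setD1.
have edge_b_Y : bruhat_edge (theta (Y :\ b)) (phi Y) by rewrite -eq_b phi_edge_setD1.
have [_ theta_union] := HC4 _ _ (phi Y) (inA _ YaI) (inA _ YbI) card_a card_b
  (phi_interval YI) uniq_vertices edge_a edge_a_Y edge_b edge_b_Y.
by rewrite -theta_union setD1U.
Qed.

Lemma phi_eq_theta Y : Y \in calI -> phi Y = theta Y.
Proof.
move: {2}#|Y| (leqnn #|Y|) => k; elim: k Y => [|k IH] Y leYk YI.
  exact: phi_eq_theta_small YI (leq_trans leYk _).
case: (leqP #|Y| 1) => [|/card_gt1P[a [b [aY bY neq_ab]]]].
  exact: phi_eq_theta_small.
have shrink (Z : {set {perm 'I_n}}) c : c \in Z -> #|Z| <= k.+1 -> #|Z :\ c| <= k.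
  by move=> cZ; apply: leq_trans (proper_card (properD1 cZ)).
have bYa : b \in Y :\ a by rewrite !inE eq_sym neq_ab.
apply: (phi_eq_theta_diamond YI aY bY neq_ab); apply: IH; rewrite ?setD1_calI //.
- exact: shrink aY leYk.
- exact: shrink bY leYk.
- exact: shrink bYa (leqW (shrink _ _ aY leYk)).
Qed.

End ClusterUniqueness.

Theorem lemma3p5 (n : nat) (u v : {perm 'I_n}) (I : {set {perm 'I_n}})
    (x : {perm 'I_n}) (theta : {set {perm 'I_n}} -> {perm 'I_n})
    (calI : {set {set {perm 'I_n}}}) (phi : {set {perm 'I_n}} -> {perm 'I_n}) :
  bruhat_le u v ->
  is_order_ideal u v I ->
  x \in I ->
  strong_hypercube_cluster u v I x theta ->
  calI \subset Acal u v I x ->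
  (forall Y Z : {set {perm 'I_n}}, Y \in calI -> Z \subset Y -> Z \in calI) ->
  {in calI &, injective phi} ->
  (forall Y, Y \in calI -> phi Y \in binterval u v) ->
  (set0 \in calI -> phi set0 = x) ->
  (forall y, [set y] \in calI -> phi [set y] = y) ->
  (forall Y1 Y2, Y1 \in calI -> Y2 \in calI -> cover_edge Y1 Y2 ->
     bruhat_edge (phi Y1) (phi Y2)) ->
  forall Y, Y \in calI -> phi Y = theta Y.
Proof.
(* Uniqueness does not depend on u <= v, on I being an ideal, or on x \in I. *)
by move=> _ _ _; exact: phi_eq_theta.
Qed.
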